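(* For any $\epsilon\in(0,1)$ and positive integer $m$, let $(Y_1,\dots,Y_m)\sim\mathcal N(0,\Sigma)$ be jointly Gaussian zero-mean random variables with $0\le\Sigma_{ii}\le\epsilon^2$ for all $i\in[m]$ and $\sum_{i=1}^m\Sigma_{ii}\le1$. Then $\mathbb{E}\max\bigl(0,\max_{i\in[m]}Y_i\bigr)=O\bigl(\epsilon\sqrt{\ln(1/\epsilon)}\bigr)$, where the implied constant does not depend on $m$ or $\Sigma$. *)

From HB Require Import structures.
From mathcomp Require Import all_boot all_order all_algebra.
From mathcomp Require Import all_classical all_reals all_analysis.
Set Implicit Arguments. Unset Strict Implicit. Unset Printing Implicit Defensive.
Import Order.TTheory GRing.Theory Num.Theory.
Local Open Scope classical_set_scope.
Local Open Scope ring_scope.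

Definition centered_normal_law {R : realType} (v : R) (A : set R) : \bar R :=
  if 0 < v then normal_prob 0 (Num.sqrt v) A else @dirac _ R 0 R A.

(* (Y_1,...,Y_m) ~ N(0, S): the Y i are real random variables on the
   probability space P and every linear combination sum_i a_i Y_i has law
   N(0, a^T S a). *)
Definition gaussian_vector {d} {T : measurableType d} {R : realType}
    (P : probability T R) (m : nat) (Y : 'I_m -> T -> R) (S : 'M[R]_m) : Prop :=
  (forall i, measurable_fun setT (Y i)) /\
  forall (a : 'I_m -> R) (A : set R), measurable A ->
    P ((fun w => \sum_(i < m) a i * Y i w) @^-1` A) =
    centered_normal_law (\sum_(i < m) \sum_(j < m) a i * a j * S i j) A.

From HB Require Import structures.
From mathcomp Require Import all_boot all_order all_algebra.
From mathcomp Require Import all_classical all_reals all_analysis.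
From mathcomp Require Import measurable_realfun ring lra.
Set Implicit Arguments. Unset Strict Implicit. Unset Printing Implicit Defensive.
Import Order.TTheory GRing.Theory Num.Theory.
Import numFieldTopology.Exports.
Local Open Scope classical_set_scope.
Local Open Scope ring_scope.

(* For every threshold t >= 0, max (0, max_i Y_i) <= t + sum_i (Y_i - t)^+,
   and for Y ~ N(0, v) integrating x against the Gaussian density on [t, +oo)
   gives E (Y - t)^+ <= sqrt v * exp (- t^2 / 2v).  Choosing
   t = 2 eps sqrt (ln (1/eps)) makes every term at most v eps when v <= eps^2,
   so sum_i v_i <= 1 bounds the expectation by t + eps <= 3 eps sqrt (ln (1/eps))
   as soon as eps <= 1/e. *)

Section normal_excess.
Context {R : realType}.
Local Notation mu := (@lebesgue_measure R).

Lemma is_derive_scaled_gauss (c k x : R) :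
  is_derive x 1 (fun y : R => - c * expR (- k * y ^+ 2))
    (- c * (expR (- k * x ^+ 2) * (- k * (2 * x)))).
Proof.
have dsq : is_derive x 1 (fun y : R => - k * y ^+ 2) (- k * (2 * x)).
  apply: is_derive_eq (is_deriveZ (- k) (is_deriveX 2 (is_derive_id x 1))) _.
  by rewrite /GRing.scale /= expr1 mulr1.
exact: is_deriveZ (is_derive1_comp (is_derive_expR _) dsq).
Qed.

Lemma normal_pdf_tail_first_moment (s t : R) : 0 < s -> 0 <= t ->
  (\int[mu]_(x in `[t, +oo[) (x * normal_pdf 0 s x)%:E =
   (normal_peak s * s ^+ 2 * expR (- t ^+ 2 / (s ^+ 2 *+ 2)))%:E)%E.
Proof.
move=> s0 t0; have sN0 : s != 0 by rewrite gt_eqF.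
set k := (s ^+ 2 *+ 2)^-1; set c := normal_peak s * s ^+ 2.
have expE y : - y ^+ 2 / (s ^+ 2 *+ 2) = - k * y ^+ 2.
  by rewrite [_ / _]mulrC mulrN mulNr.
have pdfE y : normal_pdf 0 s y = normal_peak s * expR (- k * y ^+ 2).
  by rewrite normal_pdfE// /normal_fun subr0 expE.
have ck : c * (k * 2) = normal_peak s.
  by rewrite /c /k -mulr_natr; field.
rewrite expE (_ : c * _ = 0 - - c * expR (- k * t ^+ 2)); last by ring.
apply: (ge0_continuous_FTC2y (F := fun y => - c * expR (- k * y ^+ 2))).
- by move=> x /= tx; rewrite mulr_ge0 ?normal_pdf_ge0 ?(le_trans t0 tx).
- apply: continuous_subspaceT => x.
  by apply: cvgM; [exact: cvg_id | exact: continuous_normal_pdf].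
- rewrite -(mulr0 (- c)); apply: cvgMr.
  have kx2_cvgy : (k * x ^+ 2) @[x --> +oo] --> +oo.
    apply: gt0_cvgMry; last exact: cvgr_expr2.
    by rewrite /k invr_gt0 pmulrn_lgt0// exprn_gt0.
  under eq_fun do rewrite mulNr.
  exact: cvg_comp kx2_cvgy (@cvgr_expR R).
- by move=> x _; apply: ex_derive; exact: is_derive_scaled_gauss.
- have dF : derivable (fun y : R => - c * expR (- k * y ^+ 2)) t 1.
    by apply: ex_derive; exact: is_derive_scaled_gauss.
  have := differentiable_continuous ((derivable1_diffP _ _).1 dF).
  exact: cvg_at_right_filter.
- move=> x _; rewrite derive1E derive_val pdfE -ck /GRing.scale /=; ring.
Qed.

Lemma normal_peak_mul_sqr_le (s : R) : 0 < s -> normal_peak s * s ^+ 2 <= s.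
Proof.
move=> s0; rewrite /normal_peak mulrC.
have q0 : 0 < Num.sqrt (s ^+ 2 * pi *+ 2).
  by rewrite sqrtr_gt0 pmulrn_lgt0// mulr_gt0 ?exprn_gt0 ?pi_gt0.
rewrite ler_pdivrMr// expr2 ler_pM2l// -[leLHS]gtr0_norm// -sqrtr_sqr.
rewrite ler_sqrt ?pmulrn_lge0 ?mulr_ge0 ?sqr_ge0 ?pi_ge0 ?(ltW s0)//.
by rewrite -expr2 -mulr_natr -mulrA ler_peMr ?sqr_ge0//; have := @pi_ge2 R; lra.
Qed.

Lemma integral_normal_prob (m s : R) (f : R -> \bar R) :
  (forall x, 0 <= f x)%E -> measurable_fun [set: R] f ->
  (\int[normal_prob m s]_x f x = \int[mu]_x (f x * (normal_pdf m s x)%:E))%E.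
Proof.
move=> f0 mf; have ms := normal_prob_dominates m s.
rewrite -(Radon_Nikodym_SigmaFinite.change_of_variables ms)//.
have mpdf : measurable_fun [set: R] (EFin \o normal_pdf m s).
  by apply/measurable_EFinP; exact: measurable_normal_pdf.
have intRN := Radon_Nikodym_SigmaFinite.f_integrable ms.
apply: ae_eq_integral => //.
- by apply: emeasurable_funM => //; exact: measurable_int intRN.
- exact: emeasurable_funM.
apply: ae_eqe_mul2l; apply: integral_ae_eq => //= E _ mE.
by rewrite -Radon_Nikodym_SigmaFinite.f_integral.
Qed.

Lemma measurable_max0_subr (t : R) :
  measurable_fun [set: R] (fun x => Num.max 0 (x - t)).
Proof. exact: measurable_maxr (measurable_cst _) (measurable_funB _ _). Qed.

Lemma normal_prob_excess_le (s t : R) : 0 < s -> 0 <= t ->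
  (\int[normal_prob 0 s]_x (Num.max 0 (x - t))%:E <=
   (s * expR (- t ^+ 2 / (s ^+ 2 *+ 2)))%:E)%E.
Proof.
move=> s0 t0.
have mexcess : measurable_fun [set: R] (fun x => (Num.max 0 (x - t))%:E).
  by apply/measurable_EFinP; exact: measurable_max0_subr.
rewrite integral_normal_prob//; last by move=> x; rewrite lee_fin le_max lexx.
apply: (@le_trans _ _ (\int[mu]_(x in `[t, +oo[) (x * normal_pdf 0 s x)%:E)%E).
  rewrite [leRHS]integral_mkcond; apply: ge0_le_integral => //.
  - by move=> x _; rewrite -EFinM lee_fin mulr_ge0 ?normal_pdf_ge0// le_max lexx.
  - apply: emeasurable_funM => //.
    by apply/measurable_EFinP; exact: measurable_normal_pdf.
  - apply/(measurable_restrictT _ _).1 => //; apply/measurable_EFinP.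
    apply: measurable_funTS; apply: measurable_funM => //.
    exact: measurable_normal_pdf.
  move=> x _; rewrite patchE; case: ifPn => [|xt]; rewrite -EFinM lee_fin.
    rewrite inE /= in_itv /= andbT => tx.
    by rewrite ler_wpM2r ?normal_pdf_ge0// ge_max (le_trans t0 tx) gerBl.
  have /max_idPl -> : x - t <= 0.
    rewrite subr_le0 leNgt; apply: contra xt => tx.
    by rewrite inE /= in_itv /= andbT ltW.
  by rewrite mul0r.
rewrite normal_pdf_tail_first_moment// lee_fin ler_wpM2r ?expR_ge0//.
exact: normal_peak_mul_sqr_le.
Qed.

End normal_excess.

Section gaussian_vector.
Context {R : realType} d (T : measurableType d) (P : probability T R).
Context (m : nat) (Y : 'I_m -> T -> R) (S : 'M[R]_m).
Hypothesis gY : gaussian_vector P Y S.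

Lemma gaussian_vector_coord_law i (A : set R) : measurable A ->
  P (Y i @^-1` A) = centered_normal_law (S i i) A.
Proof.
move=> mA; have := gY.2 (fun j => (j == i)%:R) A mA.
have -> : (fun w => \sum_(j < m) (j == i)%:R * Y j w) = Y i.
  apply/funext => w; rewrite (bigD1 i)//= eqxx mul1r big1 ?addr0//.
  by move=> j /negbTE ->; rewrite mul0r.
move=> ->; congr centered_normal_law.
rewrite (bigD1 i)//= [X in _ + X]big1 => [|j /negbTE ji]; last first.
  by rewrite big1 // => k _; rewrite ji !mul0r.
rewrite addr0 (bigD1 i)//= big1 ?addr0 ?eqxx ?mul1r// => j /negbTE ->.
by rewrite mulr0 mul0r.
Qed.

Lemma gaussian_vector_coord_excess_le i (t : R) : 0 <= S i i -> 0 <= t ->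
  (\int[P]_w (Num.max 0 (Y i w - t))%:E <=
   (Num.sqrt (S i i) * expR (- t ^+ 2 / (S i i *+ 2)))%:E)%E.
Proof.
move=> S0 t0; have mYi : measurable_fun [set: T] (Y i : T -> measurableTypeR R).
  exact: gY.1.
have -> : (\int[P]_w (Num.max 0 (Y i w - t))%:E =
    \int[@pushforward _ _ T (measurableTypeR R) R P (Y i)]_x
      (Num.max 0 (x - t))%:E)%E.
  rewrite (ge0_integral_pushforward mYi) //.
  - by apply/measurable_EFinP; exact: measurable_max0_subr.
  - by move=> x _; rewrite lee_fin le_max lexx.
have [Spos|] := ltrP 0 (S i i).
- rewrite (eq_measure_integral (normal_prob 0 (Num.sqrt (S i i)))); last first.
    move=> A mA _; transitivity (centered_normal_law (S i i) A).
      exact: gaussian_vector_coord_law.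
    by rewrite /centered_normal_law Spos.
  have sqrtS : 0 < Num.sqrt (S i i) by rewrite sqrtr_gt0.
  by have := normal_prob_excess_le sqrtS t0; rewrite sqr_sqrtr.
move=> Sle0; have S_eq0 : S i i = 0 by apply/le_anti; rewrite Sle0.
rewrite (eq_measure_integral (@dirac _ (measurableTypeR R) 0 R)); last first.
  move=> A mA _; transitivity (centered_normal_law (S i i) A).
    exact: gaussian_vector_coord_law.
  by rewrite /centered_normal_law S_eq0 ltxx.
rewrite integral_dirac//; last first.
  by apply/measurable_EFinP; exact: measurable_max0_subr.
rewrite diracE mem_set// mul1e S_eq0 sqrtr0 mul0r lee_fin sub0r.
by rewrite ge_max lexx oppr_le0.
Qed.
End gaussian_vector.

Section threshold.
Context {R : realType}.

Lemma threshold_tail_le (L s eps : R) : 1 <= L -> 0 < s -> s <= eps ->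
  eps = expR (- L) ->
  s * expR (- (2 * eps * Num.sqrt L) ^+ 2 / (s ^+ 2 *+ 2)) <= s ^+ 2 * eps.
Proof.
move=> L1 s0 se epsE; set u := eps / s.
have u1 : 1 <= u by rewrite ler_pdivlMr// mul1r.
have sN0 : s != 0 by rewrite gt_eqF.
have epsu : eps = u * s by rewrite divfK.
(* With u = eps / s >= 1 the exponent is -2 L u^2; then exp (-2 L) = eps^2 and
   exp (2 L (u^2 - 1)) >= 1 + 2 (u^2 - 1) >= u. *)
have -> : - (2 * eps * Num.sqrt L) ^+ 2 / (s ^+ 2 *+ 2) =
          - (2 * L) - 2 * L * (u ^+ 2 - 1).
  by rewrite exprMn sqr_sqrtr ?(le_trans ler01 L1)// epsu -mulr_natr; field.
rewrite expRD (_ : expR (- (2 * L)) = eps ^+ 2) ?expRN; last first.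
  by rewrite epsE -expRM_natl mulrN expRN.
set E := expR _.
have u_le_E : u <= E.
  apply: le_trans (expR_ge1Dx _).
  have : 0 <= (L - 1) * (u ^+ 2 - 1) by apply: mulr_ge0; nra.
  nra.
have E0 : 0 < E by rewrite expR_gt0.
rewrite (_ : s * (eps ^+ 2 * E^-1) = s ^+ 2 * eps * (u / E)); last first.
  by rewrite epsu; field; rewrite gt_eqF.
have eps0 : 0 <= eps by rewrite (le_trans (ltW s0)).
by rewrite ler_piMr ?mulr_ge0 ?(ltW s0)// ler_pdivrMr// mul1r.
Qed.

Lemma ln_inv_ge1 (eps : R) : 0 < eps <= expR (- 1) -> 1 <= ln eps^-1.
Proof.
move=> /andP[e0 e1].
by rewrite lnV ?posrE// lerNr -[- 1]expRK ler_ln ?posrE ?expR_gt0.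
Qed.

Lemma variance_threshold_tail_le (eps v : R) :
  0 < eps <= expR (- 1) -> 0 <= v <= eps ^+ 2 ->
  Num.sqrt v * expR (- (2 * eps * Num.sqrt (ln eps^-1)) ^+ 2 / (v *+ 2))
    <= v * eps.
Proof.
move=> e_range /andP[v0 ve]; have /andP[e0 _] := e_range.
have [v_gt0|v_le0] := ltrP 0 v; last first.
  have -> : v = 0 by apply/le_anti; rewrite v_le0.
  by rewrite sqrtr0 !mul0r.
have s_gt0 : 0 < Num.sqrt v by rewrite sqrtr_gt0.
have s_le : Num.sqrt v <= eps.
  by rewrite -(ger0_norm (ltW e0)) -sqrtr_sqr ler_sqrt ?sqr_ge0.
have epsE : eps = expR (- ln eps^-1) by rewrite lnV ?posrE// opprK lnK.
have := threshold_tail_le (ln_inv_ge1 e_range) s_gt0 s_le epsE.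
by rewrite sqr_sqrtr.
Qed.
End threshold.

Lemma max0_bigmaxr_le {R : realDomainType} (I : finType) (y : I -> R) (t : R) :
  0 <= t ->
  Num.max 0 (\big[Num.max/0]_i y i) <= t + \sum_i Num.max 0 (y i - t).
Proof.
move=> t0; have excess_ge0 i : 0 <= Num.max 0 (y i - t) by rewrite le_max lexx.
have sum_ge0 : 0 <= \sum_i Num.max 0 (y i - t) by exact: sumr_ge0.
rewrite ge_max; apply/andP; split; first exact: addr_ge0.
apply: bigmax_le => [|i _]; first exact: addr_ge0.
have yi_le : y i - t <= Num.max 0 (y i - t) by rewrite le_max lexx orbT.
have rest_ge0 : 0 <= \sum_(j | j != i) Num.max 0 (y j - t) by exact: sumr_ge0.
rewrite (bigD1 i)//=; lra.
Qed.

Lemma measurable_fun_bigmaxr {R : realType} d (T : measurableType d)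
    (I : Type) (r : seq I) (Y : I -> T -> R) :
  (forall i, measurable_fun [set: T] (Y i)) ->
  measurable_fun [set: T] (fun w => \big[Num.max/0]_(i <- r) Y i w).
Proof.
move=> mY; elim: r => [|i r IHr].
  by under eq_fun do rewrite big_nil; exact: measurable_cst.
under eq_fun do rewrite big_cons.
exact: measurable_maxr.
Qed.

Lemma integral_max0_bigmaxr_le {R : realType} d (T : measurableType d)
    (P : probability T R) (I : finType) (Y : I -> T -> R) (t : R) :
  (forall i, measurable_fun [set: T] (Y i)) -> 0 <= t ->
  (\int[P]_w (Num.max 0 (\big[Num.max/0]_i Y i w))%:E <=
   t%:E + \sum_i \int[P]_w (Num.max 0 (Y i w - t))%:E)%E.
Proof.
move=> mY t0.
have mexcess i : measurable_fun [set: T] (fun w => (Num.max 0 (Y i w - t))%:E).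
  apply/measurable_EFinP.
  exact: measurableT_comp (measurable_max0_subr t) (mY i).
have excess_ge0 i w : (0 <= (Num.max 0 (Y i w - t))%:E)%E.
  by rewrite lee_fin le_max lexx.
rewrite -ge0_integral_sum// -[t%:E]mule1 -(probability_setT P) -integral_cst//.
rewrite -ge0_integralD//; last 2 first.
- by move=> w _; exact: sume_ge0.
- exact: emeasurable_sum.
apply: ge0_le_integral => //.
- by move=> w _; rewrite lee_fin le_max lexx.
- apply/measurable_EFinP.
  exact: measurable_maxr (measurable_cst _) (measurable_fun_bigmaxr _ mY).
- by apply: emeasurable_funD => //; exact: emeasurable_sum.
by move=> w _; rewrite sumEFin -EFinD lee_fin max0_bigmaxr_le.
Qed.

Theorem lemma1 (R : realType) :
  exists (C : R) (eps0 : R), 0 < C /\ 0 < eps0 /\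
  forall (eps : R) (m : nat) (d : measure_display) (T : measurableType d)
         (P : probability T R) (Y : 'I_m -> T -> R) (S : 'M[R]_m),
    0 < eps < 1 -> eps < eps0 -> (0 < m)%N ->
    gaussian_vector P Y S ->
    (forall i, 0 <= S i i <= eps ^+ 2) ->
    \sum_(i < m) S i i <= 1 ->
    ('E_P[(fun w => Num.max 0 (\big[Num.max/0]_(i < m) Y i w))%R]
       <= (C * (eps * Num.sqrt (ln eps^-1)))%:E)%E.
Proof.
exists 3, (expR (- 1)); split => //; split; first exact: expR_gt0.
move=> eps m d T P Y S /andP[e0 _] e_small _ gY S_diag S_trace.
have e_range : 0 < eps <= expR (- 1) by rewrite e0 ltW.
have L1 := ln_inv_ge1 e_range.
have sqrtL1 : 1 <= Num.sqrt (ln eps^-1).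
  by rewrite -sqrtr1 ler_sqrt// (le_trans ler01 L1).
set t := 2 * eps * Num.sqrt (ln eps^-1).
have t0 : 0 <= t by rewrite !mulr_ge0 ?sqrtr_ge0 ?ltW.
rewrite unlock; apply: le_trans (integral_max0_bigmaxr_le P gY.1 t0) _.
apply: (@le_trans _ _ (t%:E + \sum_i (S i i * eps)%:E)%E).
  apply/leeD2l/lee_sum => i _; have /andP[Sii0 _] := S_diag i.
  apply: le_trans (gaussian_vector_coord_excess_le gY Sii0 t0) _.
  by rewrite lee_fin variance_threshold_tail_le.
rewrite sumEFin -EFinD lee_fin -mulr_suml.
have : (\sum_i S i i) * eps <= eps by exact: ler_piMl (ltW e0) S_trace.
rewrite /t; nra.
Qed.
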